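(* Let $L$ be a finite-dimensional Lie algebra over a field $F$. (1) If $S$ is a subalgebra with $\phi(L)\leq S\leq L$, then $\mathrm{nil}(S/\phi(L))=\mathrm{nil}(S)/\phi(L)$, where $\mathrm{nil}(S/\phi(L))$ is taken with respect to the Lie algebra $L/\phi(L)$. (2) If every two-generated proper subalgebra of $L$ is triangulable on $L$, then every two-generated proper subalgebra of $L/\phi(L)$ is triangulable on $L/\phi(L)$.
   Context: The Frattini ideal $\phi(L)$ is the largest ideal of $L$ contained in the intersection of all maximal subalgebras of $L$. For a Lie algebra $L$ and a subalgebra $S$, $\mathrm{nil}(S)$ denotes the unique maximal ideal of $S$ consisting of elements $x$ with $\mathrm{ad}_L x$ nilpotent. A subalgebra $S$ of $L$ is triangulable on $L$ if $\mathrm{ad}_L S$ is a Lie algebra of linear transformations of $L$ simultaneously triangulable over the algebraic closure of $F$ (equivalently, every element of $S^2$ acts nilpotently on $L$). A subalgebra is two-generated if it is generated as a Lie algebra by two elements. *)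

From HB Require Import structures.
From mathcomp Require Import all_boot all_order all_algebra.
Set Implicit Arguments. Unset Strict Implicit. Unset Printing Implicit Defensive.
Import GRing.Theory.
Local Open Scope ring_scope.


Section Lie.
Variables (F : fieldType) (L : vectType F) (br : L -> L -> L).

Definition is_lie : Prop :=
  [/\ (forall a x y z, br (a *: x + y) z = a *: br x z + br y z),
      (forall a x y z, br z (a *: x + y) = a *: br z x + br z y),
      (forall x, br x x = 0) &
      (forall x y z, br x (br y z) + br y (br z x) + br z (br x y) = 0)].

Definition subalg (S : {vspace L}) : Prop :=
  forall x y, x \in S -> y \in S -> br x y \in S.

Definition ideal_of (S I : {vspace L}) : Prop :=
  (I <= S)%VS /\ forall x y, x \in S -> y \in I -> br x y \in I.

Definition ideal (I : {vspace L}) : Prop := ideal_of fullv I.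

Definition maximal_subalg (M : {vspace L}) : Prop :=
  [/\ subalg M, M != fullv%VS &
      forall N : {vspace L}, subalg N -> (M <= N)%VS -> N = M \/ N = fullv%VS].

Definition is_frattini (Phi : {vspace L}) : Prop :=
  [/\ ideal Phi,
      (forall M, maximal_subalg M -> (Phi <= M)%VS) &
      (forall I, ideal I -> (forall M, maximal_subalg M -> (I <= M)%VS) ->
                 (I <= Phi)%VS)].

Definition ad_nilpotent (x : L) : Prop :=
  exists n, forall y, iter n (br x) y = 0.

Definition is_nil (S N : {vspace L}) : Prop :=
  [/\ ideal_of S N,
      (forall x, x \in N -> ad_nilpotent x) &
      (forall I, ideal_of S I -> (forall x, x \in I -> ad_nilpotent x) ->
                 (I <= N)%VS)].

(* S^2 = [S, S], the span of all brackets of elements of S (by bilinearity,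
   spanned by brackets of basis vectors). *)
Definition derived (S : {vspace L}) : {vspace L} :=
  <<[seq br x y | x <- vbasis S, y <- vbasis S]>>%VS.

Definition triangulable (S : {vspace L}) : Prop :=
  forall x, x \in derived S -> ad_nilpotent x.

Definition two_generated (S : {vspace L}) : Prop :=
  exists x y, [/\ subalg S, x \in S, y \in S &
    forall T, subalg T -> x \in T -> y \in T -> (S <= T)%VS].

End Lie.

(* pi : L -> Q presents (Q, brQ) as the quotient Lie algebra L / K. *)
Definition is_quotient_map (F : fieldType) (L Q : vectType F)
  (br : L -> L -> L) (brQ : Q -> Q -> Q) (pi : 'Hom(L, Q)) (K : {vspace L}) :=
  [/\ limg pi = fullv%VS, lker pi = K &
      forall x y, pi (br x y) = brQ (pi x) (pi y)].

(* The key fact is that ad x is nilpotent on L as soon as it is nilpotent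
   modulo phi(L).  Indeed, for m >= dim L the Fitting null component
   ker (ad x)^m is a subalgebra (Leibniz rule) and L = ker (ad x)^m + im (ad x)^m,
   where the Fitting one component im (ad x)^m lies in phi(L) for large m.
   A subalgebra supplementing phi(L) is all of L, since otherwise it would lie
   in a maximal subalgebra, which contains phi(L).  So ad-nilpotency transfers
   in both directions along L -> L/phi(L): for (1), pull an ad-nilpotent ideal
   of the image of S back to one of S; for (2), the image of the subalgebra
   generated by two lifts is the given two-generated subalgebra, and brackets
   of its elements are images of brackets in the lifted subalgebra. *)

From HB Require Import structures.
From mathcomp Require Import all_boot all_order all_algebra.
From Stdlib Require Import Classical Wf_nat.
Set Implicit Arguments. Unset Strict Implicit. Unset Printing Implicit Defensive.
Import GRing.Theory.
Local Open Scope ring_scope.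

Lemma ex_argmin_nat (T : Type) (P : T -> Prop) (f : T -> nat) (x0 : T) :
  P x0 -> exists2 x, P x & forall y, P y -> (f x <= f y)%N.
Proof.
move=> Px0.
have [n [[[x Px <-] x_min] _]] :=
  dec_inh_nat_subset_has_unique_least_element (fun n => exists2 x, P x & f x = n)
    (fun n => classic _) (ex_intro _ (f x0) (ex_intro2 _ _ x0 Px0 erefl)).
by exists x => // y Py; apply/leP/x_min; exists y.
Qed.

Section Fitting.
Variables (K : fieldType) (V : vectType K).

Lemma vspace_chain_stationary (U : nat -> {vspace V}) :
  (forall k, (U k <= U k.+1)%VS) -> exists2 k, (k <= \dim {:V})%N & U k.+1 = U k.
Proof.
move=> U_mono.
have [/existsP[k Uk]|] := boolP [exists k : 'I_(\dim {:V}).+1, (U k.+1 <= U k)%VS].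
  by exists k; [rewrite -ltnS | apply/subv_anti; rewrite Uk U_mono].
rewrite negb_exists => /forallP U_strict.
have dimU k : (k <= (\dim {:V}).+1)%N -> (k <= \dim (U k))%N.
  elim: k => // k IHk lt_k; apply: leq_ltn_trans (IHk (ltnW lt_k)) _.
  by rewrite (ltn_leqif (dimv_leqif_sup (U_mono k))) (U_strict (Ordinal lt_k)).
by have := leq_trans (dimU _ (leqnn _)) (dimvS (subvf _)); rewrite ltnn.
Qed.

Variable f : 'End(V).

Definition lfun_iter k : 'End(V) := iter k (comp_lfun f) \1%VF.

Lemma lfun_iterE k v : lfun_iter k v = iter k f v.
Proof. by elim: k => [|k IHk] /=; rewrite ?id_lfunE // comp_lfunE IHk. Qed.

Lemma mem_lker_iter k v : (v \in lker (lfun_iter k)) = (iter k f v == 0).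
Proof. by rewrite memv_ker lfun_iterE. Qed.

Lemma iter_lfun_eq0_dim n m v :
  (\dim {:V} <= m)%N -> iter n f v = 0 -> iter m f v = 0.
Proof.
have [k le_k_dim ker_k] :
    exists2 k, (k <= \dim {:V})%N & lker (lfun_iter k.+1) = lker (lfun_iter k).
  apply: vspace_chain_stationary => k; apply/subvP => u.
  by rewrite !mem_lker_iter iterS => /eqP ->; rewrite linear0.
have ker_iter_k u n' : iter n' f u = 0 -> iter k f u = 0.
  elim: n' u => [|n' IHn'] u; first by move=> /= ->; rewrite iter_fix ?linear0.
  rewrite iterSr => /IHn' fku; apply/eqP.
  by rewrite -mem_lker_iter -ker_k mem_lker_iter iterSr fku.
move=> le_dim_m /ker_iter_k fkv.
by rewrite -(subnK (leq_trans le_k_dim le_dim_m)) iterD fkv iter_fix ?linear0.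
Qed.

Lemma fitting_decomposition m :
  (\dim {:V} <= m)%N -> (lker (lfun_iter m) + limg (lfun_iter m))%VS = fullv.
Proof.
move=> le_dim_m.
have ker_img0 : (lker (lfun_iter m) :&: limg (lfun_iter m))%VS = 0%VS.
  apply/eqP; rewrite -subv0; apply/subvP => u.
  rewrite memv_cap memv0 => /andP[u_ker /memv_imgP[v _ u_def]].
  move: u_ker; rewrite u_def mem_lker_iter !lfun_iterE -iterD.
  by move=> /eqP/(iter_lfun_eq0_dim le_dim_m) ->.
apply/eqP; rewrite eqEdim subvf dimv_disjoint_sum //.
by rewrite -(limg_ker_dim (lfun_iter m) fullv) capfv addnC leqnn.
Qed.

End Fitting.

Section LieAlgebra.
Variables (F : fieldType) (L : vectType F) (br : L -> L -> L).
Hypothesis lieL : is_lie br.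

Definition ad (x : L) : L -> L := br x.
Definition adr (z : L) : L -> L := br^~ z.

Fact ad_is_linear x : linear (ad x).
Proof. by case: lieL => _ brDr _ _ a u v; apply: brDr. Qed.
HB.instance Definition _ x :=
  GRing.isLinear.Build F L L *:%R (ad x) (ad_is_linear x).

Fact adr_is_linear z : linear (adr z).
Proof. by case: lieL => brDl _ _ _ a u v; apply: brDl. Qed.
HB.instance Definition _ z :=
  GRing.isLinear.Build F L L *:%R (adr z) (adr_is_linear z).

Lemma brDr x u v : br x (u + v) = br x u + br x v.
Proof. exact: (linearD (ad x)). Qed.
Lemma brDl z u v : br (u + v) z = br u z + br v z.
Proof. exact: (linearD (adr z)). Qed.
Lemma brNr x u : br x (- u) = - br x u.
Proof. exact: (linearN (ad x)). Qed.
Lemma br0r x : br x 0 = 0. Proof. exact: (linear0 (ad x)). Qed.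
Lemma br0l x : br 0 x = 0. Proof. exact: (linear0 (adr x)). Qed.

Lemma brC x y : br x y = - br y x.
Proof.
case: lieL => _ _ brxx _; apply/eqP; rewrite -addr_eq0.
have := brxx (x + y).
by rewrite brDl !brDr !brxx add0r addr0 => ->.
Qed.

Lemma ad_derivation x a b : br x (br a b) = br (br x a) b + br a (br x b).
Proof.
case: lieL => _ _ _ jacobi; apply/eqP; rewrite -subr_eq0.
have := jacobi x a b; rewrite (brC b x) (brC (br x a) b) (brC a (br x b)).
rewrite brNr [br (br x b) a]brC opprK.
by move=> <-; rewrite opprD opprK addrA addrAC.
Qed.

Lemma iter_ad0 x n : iter n (br x) 0 = 0.
Proof. by elim: n => //= n ->; rewrite br0r. Qed.

Lemma iter_adD x n u v :
  iter n (br x) (u + v) = iter n (br x) u + iter n (br x) v.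
Proof. by elim: n => //= n ->; rewrite brDr. Qed.

(* Leibniz rule for the derivation ad x. *)
Lemma iter_ad_br_eq0 x p q a b :
  iter p (br x) a = 0 -> iter q (br x) b = 0 -> iter (p + q) (br x) (br a b) = 0.
Proof.
elim: p q a b => [|p IHp] q a b; first by move=> /= ->; rewrite br0l iter_ad0.
move=> ad_a; elim: q b => [|q IHq] b; first by move=> /= ->; rewrite br0r iter_ad0 ?br0r.
move=> ad_b; rewrite addSn iterSr ad_derivation iter_adD.
by rewrite IHp ?add0r -?iterSr // -addSnnS IHq // -iterSr.
Show.
Qed.

Lemma br_mem_derived (S : {vspace L}) u v :
  u \in S -> v \in S -> br u v \in derived br S.
Proof.
have br_vbasis w e : w \in S -> e \in vbasis S -> br e w \in derived br S.
  move=> wS eS; rewrite -/(ad e w) (coord_vbasis wS) linear_sum memv_suml // => i _.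
  by rewrite linearZ memvZ // memv_span // allpairs_f // memt_nth.
move=> uS vS; rewrite -/(adr v u) (coord_vbasis uS) linear_sum memv_suml // => i _.
by rewrite linearZ memvZ // br_vbasis // memt_nth.
Qed.

End LieAlgebra.

Section Subalgebras.
Variables (F : fieldType) (L : vectType F) (br : L -> L -> L).

Lemma subalg_cap (S T : {vspace L}) :
  subalg br S -> subalg br T -> subalg br (S :&: T)%VS.
Proof.
move=> subS subT x y; rewrite !memv_cap => /andP[xS xT] /andP[yS yT].
by rewrite subS ?subT.
Qed.

Lemma maximal_subalg_exists (B : {vspace L}) :
  subalg br B -> B != fullv%VS -> exists2 M, maximal_subalg br M & (B <= M)%VS.
Proof.
move=> subB B_proper.
have [M [subM BM M_proper] M_max] := ex_argmin_nat
  (P := fun M => [/\ subalg br M, (B <= M)%VS & M != fullv%VS])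
  (fun M => \dim {:L} - \dim M)%N (And3 subB (subvv B) B_proper).
exists M => //; split=> // N subN MN.
have [-> | N_proper] := eqVneq N fullv%VS; [by right | left].
have := M_max N (And3 subN (subv_trans BM MN) N_proper).
rewrite leq_sub2lE ?(dimvS (subvf N)) // => dimNM.
by apply/eqP; rewrite eq_sym eqEdim MN.
Qed.

Section Frattini.
Variable Phi : {vspace L}.
Hypothesis Phi_sub_maximal : forall M, maximal_subalg br M -> (Phi <= M)%VS.

Lemma frattini_supplement (B : {vspace L}) :
  subalg br B -> (B + Phi)%VS = fullv%VS -> B = fullv%VS.
Proof.
move=> subB BPhi; apply/eqP; apply: contraT => B_proper.
have [M M_max BM] := maximal_subalg_exists subB B_proper.
have [_ M_proper _] := M_max.
suff fullM : (fullv <= M)%VS by rewrite eqEsubv subvf fullM in M_proper.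
by rewrite -BPhi subv_add BM Phi_sub_maximal.
Qed.

Hypothesis lieL : is_lie br.

(* The Fitting null component of ad x is a subalgebra supplementing Phi. *)
Lemma ad_nilpotent_mod_frattini x n :
  (forall y, iter n (br x) y \in Phi) -> ad_nilpotent br x.
Proof.
move=> adxn_Phi; pose D : 'End(L) := linfun (ad br x).
have iter_linfun k y : iter k D y = iter k (br x) y.
  by elim: k => //= k ->; rewrite /D lfunE.
pose m := (n + \dim {:L})%N; have le_dim_m : (\dim {:L} <= m)%N by rewrite leq_addl.
pose K := lker (lfun_iter D m).
have memK y : (y \in K) = (iter m (br x) y == 0).
  by rewrite mem_lker_iter iter_linfun.
have subK : subalg br K.
  move=> a b; rewrite !memK => /eqP adm_a /eqP adm_b.
  rewrite -iter_linfun; apply/eqP/(iter_lfun_eq0_dim (n := m + m)) => //.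
  by rewrite iter_linfun iter_ad_br_eq0.
have img_Phi : (limg (lfun_iter D m) <= Phi)%VS.
  by apply/subvP => _ /memv_imgP[y _ ->]; rewrite lfun_iterE iter_linfun iterD.
have K_full : K = fullv%VS.
  apply: frattini_supplement => //; apply/eqP; rewrite eqEsubv subvf /=.
  by rewrite -(fitting_decomposition D le_dim_m) addvS.
by exists m => y; apply/eqP; rewrite -memK K_full memvf.
Qed.

End Frattini.

Definition subalg_generated (a b : L) (S : {vspace L}) : Prop :=
  [/\ subalg br S, a \in S, b \in S &
      forall T, subalg br T -> a \in T -> b \in T -> (S <= T)%VS].

Lemma subalg_generated_exists a b : exists S, subalg_generated a b S.
Proof.
have subL : subalg br fullv by move=> x y _ _; apply: memvf.
have [S [subS aS bS] S_min] := ex_argmin_nat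
  (P := fun S => [/\ subalg br S, a \in S & b \in S])
  (fun S => \dim S) (And3 subL (memvf a) (memvf b)).
exists S; split=> // T subT aT bT; apply/capv_idPl/eqP.
rewrite eqEdim capvSl S_min //.
by split; [apply: subalg_cap | rewrite memv_cap aS | rewrite memv_cap bS].
Qed.

Lemma subalg_generated_unique a b (S T : {vspace L}) :
  subalg_generated a b S -> subalg_generated a b T -> S = T.
Proof.
move=> [subS aS bS S_min] [subT aT bT T_min].
by apply/subv_anti; rewrite S_min ?T_min.
Qed.

End Subalgebras.

Section Quotient.
Variables (F : fieldType) (L Q : vectType F).
Variables (br : L -> L -> L) (brQ : Q -> Q -> Q) (pi : 'Hom(L, Q)).
Hypothesis pi_onto : limg pi = fullv%VS.
Hypothesis pi_br : forall x y, pi (br x y) = brQ (pi x) (pi y).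

Lemma quotient_lift (w : Q) : exists y, w = pi y.
Proof.
have : w \in limg pi by rewrite pi_onto memvf.
by case/memv_imgP=> y _ ->; exists y.
Qed.

Lemma iter_br_quotient k x y :
  pi (iter k (br x) y) = iter k (brQ (pi x)) (pi y).
Proof. by elim: k => //= k <-; rewrite pi_br. Qed.

Lemma ad_nilpotent_quotient x : ad_nilpotent br x -> ad_nilpotent brQ (pi x).
Proof.
move=> [n adxn]; exists n => w; have [y ->] := quotient_lift w.
by rewrite -iter_br_quotient adxn linear0.
Qed.

Lemma subalg_img (S : {vspace L}) : subalg br S -> subalg brQ (pi @: S)%VS.
Proof.
move=> subS _ _ /memv_imgP[x xS ->] /memv_imgP[y yS ->].
by rewrite -pi_br memv_img ?subS.
Qed.

Lemma subalg_preim (T : {vspace Q}) : subalg brQ T -> subalg br (pi @^-1: T)%VS.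
Proof. by move=> subT x y; rewrite -!memv_preim pi_br; apply: subT. Qed.

Lemma ideal_of_img (S N : {vspace L}) :
  ideal_of br S N -> ideal_of brQ (pi @: S)%VS (pi @: N)%VS.
Proof.
move=> [NS N_ideal]; split; first exact: limgS.
move=> _ _ /memv_imgP[x xS ->] /memv_imgP[y yN ->].
by rewrite -pi_br memv_img ?N_ideal.
Qed.

Lemma ideal_of_preim (S : {vspace L}) (J : {vspace Q}) : subalg br S ->
  ideal_of brQ (pi @: S)%VS J -> ideal_of br S (S :&: pi @^-1: J)%VS.
Proof.
move=> subS [_ J_ideal]; split; first exact: capvSl.
move=> x y xS; rewrite !memv_cap -!memv_preim => /andP[yS yJ].
by rewrite subS ?pi_br ?J_ideal ?memv_img.
Qed.

Lemma subalg_generated_img a b (S : {vspace L}) :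
  subalg_generated br a b S -> subalg_generated brQ (pi a) (pi b) (pi @: S)%VS.
Proof.
move=> [subS aS bS S_min].
split; [exact: subalg_img | exact: memv_img | exact: memv_img |].
move=> T subT aT bT; apply/subvP => _ /memv_imgP[x xS ->]; rewrite memv_preim.
by apply: (subvP (S_min _ (subalg_preim subT) _ _)); rewrite // -memv_preim.
Qed.

Hypothesis lieL : is_lie br.

Lemma derived_img (S : {vspace L}) :
  (derived brQ (pi @: S) <= pi @: derived br S)%VS.
Proof.
apply/span_subvP => _ /allpairsP[[u v] [/vbasis_mem uS /vbasis_mem vS ->]].
move: uS vS => /memv_imgP[x xS ->] /memv_imgP[y yS ->].
by rewrite -pi_br memv_img // br_mem_derived.
Qed.

Lemma triangulable_img (S : {vspace L}) :
  triangulable br S -> triangulable brQ (pi @: S)%VS.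
Proof.
move=> triS _ /(subvP (derived_img S))/memv_imgP[x xS ->].
exact/ad_nilpotent_quotient/triS.
Qed.

Hypothesis ker_pi_sub_maximal :
  forall M, maximal_subalg br M -> (lker pi <= M)%VS.

Lemma ad_nilpotent_lift x : ad_nilpotent brQ (pi x) -> ad_nilpotent br x.
Proof.
move=> [n adxn]; apply: (ad_nilpotent_mod_frattini ker_pi_sub_maximal lieL (n := n)).
by move=> y; rewrite memv_ker iter_br_quotient adxn.
Qed.

Lemma is_nil_img (S N : {vspace L}) :
  subalg br S -> is_nil br S N -> is_nil brQ (pi @: S)%VS (pi @: N)%VS.
Proof.
move=> subS [N_ideal N_nil N_max]; split; first exact: ideal_of_img.
  by move=> _ /memv_imgP[x xN ->]; apply/ad_nilpotent_quotient/N_nil.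
move=> J J_ideal J_nil; have [JS _] := J_ideal.
have preJ_N : (S :&: pi @^-1: J <= N)%VS.
  apply: N_max => [|x]; first exact: ideal_of_preim.
  by rewrite memv_cap -memv_preim => /andP[_ /J_nil/ad_nilpotent_lift].
apply/subvP => _ /[dup] /(subvP JS)/memv_imgP[x xS ->] pixJ.
by rewrite memv_img // (subvP preJ_N) // memv_cap xS -memv_preim.
Qed.

Lemma triangulable_quotient :
  (forall S, two_generated br S -> S != fullv%VS -> triangulable br S) ->
  forall T, two_generated brQ T -> T != fullv%VS -> triangulable brQ T.
Proof.
move=> triL T [u [v genT]] T_proper.
have [a u_def] := quotient_lift u; have [b v_def] := quotient_lift v.
subst u v; have [S genS] := subalg_generated_exists br a b.
have piST := subalg_generated_unique (subalg_generated_img genS) genT.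
rewrite -piST; apply/triangulable_img/triL; first by exists a, b.
by apply: contraNneq T_proper => S_full; rewrite -piST S_full pi_onto.
Qed.

End Quotient.

Theorem lemma4p5 (F : fieldType) (L Q : vectType F)
  (br : L -> L -> L) (brQ : Q -> Q -> Q)
  (hL : is_lie br) (hQ : is_lie brQ)
  (Phi : {vspace L}) (hPhi : is_frattini br Phi)
  (pi : 'Hom(L, Q)) (hpi : is_quotient_map br brQ pi Phi) :
  (forall S N : {vspace L}, subalg br S -> (Phi <= S)%VS ->
     is_nil br S N -> is_nil brQ (pi @: S)%VS (pi @: N)%VS)
  /\
  ((forall S : {vspace L}, two_generated br S -> S != fullv%VS ->
      triangulable br S) ->
   forall T : {vspace Q}, two_generated brQ T -> T != fullv%VS ->
      triangulable brQ T).
Proof.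
have [pi_onto ker_pi pi_br] := hpi; have [_ Phi_sub_maximal _] := hPhi.
rewrite -ker_pi in Phi_sub_maximal.
split=> [S N subS _ | ]; first exact: (is_nil_img pi_onto pi_br hL Phi_sub_maximal subS).
exact: (triangulable_quotient pi_onto pi_br hL).
Qed.
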